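(* Let $\mathcal P_X,\mathcal P_Y$ be probability measures on $(E,\mathcal E)$ with $\mathcal P_Y\ll\mathcal P_X$, $L=d\mathcal P_Y/d\mathcal P_X$, and assume $L(\mathbf Z)$ has a continuous distribution under $\mathbf Z\sim\mathcal P_X$. Let $\theta(z)=L(z)/(1+L(z))$. Let $\mathbf Z_X,\mathbf Z_X'\sim\mathcal P_X$ and $\mathbf Z_Y\sim\mathcal P_Y$ be independent, and set $\delta:=\mathbb E|L(\mathbf Z_X)-L(\mathbf Z_X')|$ and $\mu:=\mathbb P(\theta(\mathbf Z_X)<\theta(\mathbf Z_Y))$. Then $\delta=4\mu-2$, i.e. $\mu=\tfrac12+\tfrac{\delta}{4}$.
   Context: $\theta$ is the population conditional probability of label $1$ for a sample drawn with equal weight from $\mathcal P_X$ (label 0) and $\mathcal P_Y$ (label 1); note $\theta/(1-\theta)=L$ and $\theta$ is a strictly increasing function of $L$. *)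

From HB Require Import structures.
From mathcomp Require Import all_boot all_order all_algebra.
From mathcomp Require Import all_classical all_reals all_analysis.
Set Implicit Arguments. Unset Strict Implicit. Unset Printing Implicit Defensive.
Import Order.TTheory GRing.Theory Num.Theory.
Local Open Scope ring_scope.

Definition theta_of {T} {R : realType} (L : T -> R) (z : T) : R :=
  L z / (1 + L z).

From HB Require Import structures.
From mathcomp Require Import all_boot all_order all_algebra.
From mathcomp Require Import all_classical all_reals all_analysis.
From mathcomp Require Import measurable_realfun lra.
Import Order.TTheory GRing.Theory Num.Theory.
Import numFieldNormedType.Exports.
Set Implicit Arguments.
Unset Strict Implicit.
Unset Printing Implicit Defensive.
Local Open Scope classical_set_scope.
Local Open Scope ring_scope.

(* Since |a - b| + a + b = 2 max(a, b), delta + 2 is twice the integral of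
   max(L z, L z') against PX x PX.  Split the square along L z < L z',
   L z' < L z and L z = L z': the tie set is null because L has no atoms under
   PX, the two strict parts contribute equally by symmetry, and on
   {L z < L z'} the factor L z' turns the second PX into PY.  As theta is an
   increasing function of L, that part is mu, whence delta + 2 = 4 mu. *)

Lemma ltr_div1D (R : realFieldType) (a b : R) : 0 <= a -> 0 <= b ->
  (a / (1 + a) < b / (1 + b)) = (a < b).
Proof.
move=> a0 b0.
have a1 : 0 < 1 + a by lra.
have b1 : 0 < 1 + b by lra.
rewrite ltr_pdivrMr // mulrAC ltr_pdivlMr // !mulrDr !mulr1 (mulrC b a).
by rewrite ltrD2r.
Qed.

Lemma normrB_addD (R : realDomainType) (a b : R) :
  `|a - b| + a + b = 2 * Num.max a b.
Proof.
case: (leP a b) => h.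
- rewrite ler0_norm ?subr_le0 //; lra.
- rewrite gtr0_norm ?subr_gt0 //; lra.
Qed.

Section comparison_sets.
Context d (T : measurableType d) (R : realType) (f g : T -> R).
Hypotheses (mf : measurable_fun setT f) (mg : measurable_fun setT g).

Lemma measurable_ltr_set : measurable [set x | f x < g x].
Proof.
have := measurable_lte measurableT ((measurable_EFinP _ _).2 mf)
  ((measurable_EFinP _ _).2 mg).
by rewrite setTI; under eq_set do rewrite lte_fin.
Qed.

Lemma measurable_eqr_set : measurable [set x | f x = g x].
Proof.
have := measurable_eqe measurableT ((measurable_EFinP _ _).2 mf)
  ((measurable_EFinP _ _).2 mg).
rewrite setTI; congr measurable; apply/seteqP; split => x /=; first by case.
by move->.
Qed.

End comparison_sets.

Section product_measure_lemmas.
Local Open Scope ereal_scope.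
Context d1 d2 (T1 : measurableType d1) (T2 : measurableType d2) (R : realType).

Lemma integral_prod_swap (m1 : {sigma_finite_measure set T1 -> \bar R})
    (m2 : {sigma_finite_measure set T2 -> \bar R}) (f : T2 * T1 -> \bar R) :
  measurable_fun setT f -> (forall p, 0 <= f p) ->
  \int[m1 \x m2]_p f (p.2, p.1) = \int[m2 \x m1]_p f p.
Proof.
move=> mf f0; rewrite fubini_tonelli1 ?fubini_tonelli2 //.
exact: (measurableT_comp mf (@measurable_swap _ _ T1 T2)).
Qed.

Lemma product_measure_density (m : {sigma_finite_measure set T1 -> \bar R})
    (PX PY : {sigma_finite_measure set T2 -> \bar R}) (L : T2 -> R) :
    measurable_fun setT L -> (forall y, 0 <= L y)%R ->
    (forall B, measurable B -> PY B = \int[PX]_(y in B) (L y)%:E) ->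
  forall A, measurable A -> (m \x PY) A = \int[m \x PX]_(p in A) (L p.2)%:E.
Proof.
move=> mL L0 hL A mA.
have mLA : measurable_fun setT ((fun p : T1 * T2 => (L p.2)%:E) \_ A).
  apply: (measurable_restrictT _ mA).1; apply: measurable_funTS.
  exact: (measurable_EFinP _ _).2 (measurableT_comp mL measurable_snd).
rewrite integral_mkcond (fubini_tonelli1 _ mLA); last first.
  by move=> p; apply: erestrict_ge0 => q _; rewrite lee_fin.
apply: eq_integral => x _; rewrite /fubini_F /= hL; last exact: measurable_xsection.
by rewrite integral_mkcond; apply: eq_integral => y _; rewrite /patch mem_xsection.
Qed.

Lemma product_measure_eq_null (m1 : {measure set T1 -> \bar R})
    (m2 : {sigma_finite_measure set T2 -> \bar R}) (f1 : T1 -> R) (f2 : T2 -> R) :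
  (forall t, m2 (f2 @^-1` [set t]) = 0) ->
  (m1 \x m2) [set p | f1 p.1 = f2 p.2] = 0.
Proof.
move=> f2_atomless; apply: integral0_eq => x _ /=.
rewrite -(f2_atomless (f1 x)); congr (m2 _).
by apply/seteqP; split => y; rewrite /xsection /= in_setE /= => ->.
Qed.

End product_measure_lemmas.

Lemma ge0_integralD_EFin d (T : measurableType d) (R : realType)
    (m : {measure set T -> \bar R}) (f g : T -> R) :
  measurable_fun setT f -> measurable_fun setT g ->
  (forall x, 0 <= f x) -> (forall x, 0 <= g x) ->
  (\int[m]_x (f x + g x)%:E = \int[m]_x (f x)%:E + \int[m]_x (g x)%:E)%E.
Proof.
move=> mf mg f0 g0; under eq_integral do rewrite EFinD.
apply: ge0_integralD => //.
- by move=> x _; rewrite lee_fin.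
- exact/measurable_EFinP.
- by move=> x _; rewrite lee_fin.
- exact/measurable_EFinP.
Qed.

Section likelihood_ratio.
Local Open Scope ereal_scope.
Context (R : realType) d (E : measurableType d) (PX PY : probability E R).
Variable L : E -> R.
Hypotheses (mL : measurable_fun setT L) (L0 : forall z, (0 <= L z)%R).
Hypothesis hL : forall A, measurable A -> PY A = \int[PX]_(z in A) (L z)%:E.
Hypothesis L_atomless : forall t, PX (L @^-1` [set t]) = 0.

Let mL1 : measurable_fun setT (fun p : E * E => L p.1) :=
  measurableT_comp mL measurable_fst.
Let mL2 : measurable_fun setT (fun p : E * E => L p.2) :=
  measurableT_comp mL measurable_snd.

Lemma integral_snd_density : \int[PX \x PX]_p (L p.2)%:E = 1.
Proof.
by rewrite -(product_measure_density PX mL L0 hL measurableT) probability_setT.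
Qed.

Lemma integral_fst_density : \int[PX \x PX]_p (L p.1)%:E = 1.
Proof.
rewrite -integral_snd_density.
rewrite (integral_prod_swap PX PX (f := fun p : E * E => (L p.2)%:E)) //.
- exact: (measurable_EFinP _ _).2 mL2.
- by move=> p; rewrite lee_fin.
Qed.

Lemma integral_ltr_density :
  \int[PX \x PX]_(p in [set p | L p.1 < L p.2]%R) (L p.2)%:E =
  (PX \x PY) [set p | theta_of L p.1 < theta_of L p.2]%R.
Proof.
have -> : [set p : E * E | theta_of L p.1 < theta_of L p.2]%R =
          [set p | L p.1 < L p.2]%R.
  by apply: eq_set => p; rewrite /theta_of (ltr_div1D (L0 p.1) (L0 p.2)).
by rewrite (product_measure_density PX mL L0 hL (measurable_ltr_set mL1 mL2)).
Qed.

Lemma integral_gtr_fst :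
  \int[PX \x PX]_(p in [set p | L p.2 < L p.1]%R) (L p.1)%:E =
  \int[PX \x PX]_(p in [set p | L p.1 < L p.2]%R) (L p.2)%:E.
Proof.
pose g := (fun p : E * E => (L p.2)%:E) \_ [set p | L p.1 < L p.2]%R.
rewrite [LHS]integral_mkcond [RHS]integral_mkcond.
transitivity (\int[PX \x PX]_p g (p.2, p.1)).
  by apply: eq_integral => p _; rewrite /g /patch.
apply: (integral_prod_swap PX PX (f := g)).
- apply: (measurable_restrictT _ (measurable_ltr_set mL1 mL2)).1.
  by apply: measurable_funTS; exact: (measurable_EFinP _ _).2 mL2.
- by move=> p; apply: erestrict_ge0 => q _; rewrite lee_fin.
Qed.

Lemma integral_tie :
  \int[PX \x PX]_(p in [set p | L p.1 = L p.2]) (L p.1)%:E = 0.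
Proof.
apply: null_set_integral; first exact: measurable_eqr_set.
- by apply: measurable_funTS; exact: (measurable_EFinP _ _).2 mL1.
- exact: product_measure_eq_null.
Qed.

Lemma integral_max_density :
  \int[PX \x PX]_p (Num.max (L p.1) (L p.2))%:E =
  \int[PX \x PX]_(p in [set p | L p.1 < L p.2]%R) (L p.2)%:E +
  \int[PX \x PX]_(p in [set p | L p.1 < L p.2]%R) (L p.2)%:E.
Proof.
set lt := [set p : E * E | L p.1 < L p.2]%R.
set gt := [set p : E * E | L p.2 < L p.1]%R.
set tie := [set p : E * E | L p.1 = L p.2].
have mlt : measurable lt := measurable_ltr_set mL1 mL2.
have mgt : measurable gt := measurable_ltr_set mL2 mL1.
have mtie : measurable tie := measurable_eqr_set mL1 mL2.
have mltgt : measurable (lt `|` gt) by exact: measurableU.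
have mmax D : measurable_fun D (fun p : E * E => (Num.max (L p.1) (L p.2))%:E).
  apply: measurable_funTS.
  exact: (measurable_EFinP _ _).2 (measurable_maxr mL1 mL2).
have max0 p : 0 <= (Num.max (L p.1) (L p.2))%:E.
  by rewrite lee_fin le_max L0.
transitivity (\int[PX \x PX]_(p in (lt `|` gt) `|` tie)
    (Num.max (L p.1) (L p.2))%:E).
  congr (integral _ _ _); apply/seteqP; split => // p _ /=.
  by case: (ltgtP (L p.1) (L p.2)); [left; left|left; right|right].
rewrite (ge0_integral_setU _ mltgt mtie) //; last first.
  apply/disj_setPS => p [[]]; rewrite /lt /gt /tie /= => h1 h2.
  - by move: h1; rewrite h2 ltxx.
  - by move: h1; rewrite h2 ltxx.
rewrite (ge0_integral_setU _ mlt mgt) //; last first.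
  apply/disj_setPS => p []; rewrite /lt /gt /=.
  by move=> /lt_trans/[apply]; rewrite ltxx.
have -> : \int[PX \x PX]_(p in lt) (Num.max (L p.1) (L p.2))%:E =
          \int[PX \x PX]_(p in lt) (L p.2)%:E.
  by apply: eq_integral => p; rewrite in_setE => /ltW h; rewrite max_r.
have -> : \int[PX \x PX]_(p in gt) (Num.max (L p.1) (L p.2))%:E =
          \int[PX \x PX]_(p in gt) (L p.1)%:E.
  by apply: eq_integral => p; rewrite in_setE => /ltW h; rewrite max_l.
have -> : \int[PX \x PX]_(p in tie) (Num.max (L p.1) (L p.2))%:E =
          \int[PX \x PX]_(p in tie) (L p.1)%:E.
  by apply: eq_integral => p; rewrite in_setE => h; rewrite -h maxxx.
by rewrite integral_gtr_fst integral_tie adde0.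
Qed.

Lemma integral_normrB_density :
  \int[PX \x PX]_p (`|L p.1 - L p.2|)%:E + 1 + 1 =
  2%:E * ((PX \x PY) [set p | theta_of L p.1 < theta_of L p.2]%R +
          (PX \x PY) [set p | theta_of L p.1 < theta_of L p.2]%R).
Proof.
have mdist : measurable_fun setT (fun p : E * E => `|L p.1 - L p.2|%R).
  by apply: measurableT_comp => //; exact: measurable_funB.
rewrite -{1}integral_fst_density -integral_snd_density -integral_ltr_density.
rewrite -!ge0_integralD_EFin //; last 2 first.
- exact: measurable_funD.
- by move=> p; rewrite addr_ge0.
under eq_integral do rewrite normrB_addD EFinM.
rewrite ge0_integralZl_EFin // ?integral_max_density //.
- by move=> p _; rewrite lee_fin le_max L0.
- exact: (measurable_EFinP _ _).2 (measurable_maxr mL1 mL2).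
Qed.

End likelihood_ratio.

Theorem lemma7 (R : realType) (d : measure_display) (E : measurableType d)
  (PX PY : probability E R) (L : E -> R)
  (hac : PY `<< PX)
  (hLmeas : measurable_fun setT L)
  (hLge0 : forall z, 0 <= L z)
  (hL : forall A, measurable A -> PY A = (\int[PX]_(z in A) (L z)%:E)%E)
  (hcont : forall t : R, PX (L @^-1` [set t]) = 0%E) :
  let delta := (\int[(PX \x PX)%E]_(p in setT) (`|L p.1 - L p.2|)%:E)%E in
  let mu := (PX \x PY)%E [set p | theta_of L p.1 < theta_of L p.2] in
  delta = (4%:E * mu - 2%:E)%E.
Proof.
move=> delta mu.
have := integral_normrB_density hLmeas hLge0 hL hcont; rewrite -/delta -/mu.
have mu0 : (0 <= mu)%E := measure_ge0 _ _.
clearbody delta mu; case: mu mu0 => [y||] // _; case: delta => [x||] //=.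
- by rewrite -!EFinD /= => -[h]; congr EFin; lra.
all: by rewrite !gt0_muley.
Qed.
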